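(* Let $\{F_n\}_{n\geq 0}$ be a sequence of positive integers with $F_0=1$, and let $\Pi$ be the cobweb poset it determines. Let $\mu$ denote the M\''obius function of $\Pi$, and let $0=\langle 1,0\rangle$ be its unique minimal element. For $k\geq 0$ define the Whitney number of the first kind $w_k(\Pi)=\sum_{x\in\Pi,\ r(x)=k}\mu(0,x)$. Then $$w_0(\Pi)=1,\qquad w_k(\Pi)=F_k\cdot(-1)^k\prod_{i=1}^{k-1}(F_i-1)\quad (k>0).$$ The same formulas hold for the Whitney numbers of the first kind $w_k(P_n)=\sum_{x\in P_n,\ r(x)=k}\mu_{P_n}(0,x)$ of every finite cobweb subposet $P_n$, $n\geq 0$, for $0\leq k\leq n$.
   Context: Cobweb poset: given the sequence $\{F_n\}_{n\ge 0}$, for $s\geq 0$ let the $s$-th level be $\Phi_s=\{\langle j,s\rangle : 1\leq j\leq F_s\}$, and let $V=\bigcup_{s\geq 0}\Phi_s$. The cobweb poset is $\Pi=(V,\leq)$ where for $x=\langle s,t\rangle$, $y=\langle u,v\rangle$ one has $x\leq y$ iff ($t<v$) or ($t=v$ and $s=u$). Its rank function is $r(x)=s$ for $x\in\Phi_s$; $\langle 1,0\rangle$ is its unique minimal element. For $n\geq 0$ the finite cobweb subposet $P_n$ is $V_n=\bigcup_{0\leq s\leq n}\Phi_s$ with the order induced from $\Pi$. The empty product (for $k=1$) equals $1$. *)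

From mathcomp Require Import all_boot all_order all_algebra.
Set Implicit Arguments. Unset Strict Implicit. Unset Printing Implicit Defensive.
Import GRing.Theory Num.Theory.

(* A locally finite poset is given by its order relation [le] on a carrier
   [T] together with [itv x y], an enumeration of the (finite) interval
   [x, y] = { z | x <= z <= y }.
   The recursion is run with fuel; the fuel [size (itv x y)] is always
   sufficient, since for x <= z < y the interval [x,z] is strictly smaller
   than [x,y]. *)
Fixpoint mobius_fuel (T : eqType) (le : rel T) (itv : T -> T -> seq T)
    (n : nat) (x y : T) : int :=
  match n with
  | 0 => 0
  | n'.+1 =>
      if x == y then 1
      else if le x y then
        - \sum_(z <- itv x y | z != y) mobius_fuel le itv n' x z
      else 0
  end%R.

Definition mobius (T : eqType) (le : rel T) (itv : T -> T -> seq T)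
    (x y : T) : int :=
  mobius_fuel le itv (size (itv x y)) x y.

(* A vertex <j, s> is encoded as the pair (j, s) : nat * nat. *)

Definition level (F : nat -> nat) (s : nat) : seq (nat * nat) :=
  [seq (j, s) | j <- iota 1 (F s)].

Definition Vn (F : nat -> nat) (n : nat) : seq (nat * nat) :=
  flatten [seq level F s | s <- iota 0 n.+1].

Definition cobweb_le (x y : nat * nat) : bool :=
  (x.2 < y.2) || (x == y).

Definition rank (x : nat * nat) : nat := x.2.

Definition cobweb_zero : nat * nat := (1, 0).

(* Intervals of the whole cobweb poset Pi: every z <= y lies in
   V_{r(y)}, so [x,y] = { z in V_{r(y)} | x <= z <= y }. *)
Definition itv_Pi (F : nat -> nat) (x y : nat * nat) : seq (nat * nat) :=
  [seq z <- Vn F (rank y) | cobweb_le x z && cobweb_le z y].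

Definition itv_P (F : nat -> nat) (n : nat) (x y : nat * nat)
    : seq (nat * nat) :=
  [seq z <- Vn F n | cobweb_le x z && cobweb_le z y].

Definition mu_Pi (F : nat -> nat) := mobius cobweb_le (itv_Pi F).
Definition mu_P (F : nat -> nat) (n : nat) := mobius cobweb_le (itv_P F n).

Definition whitney_Pi (F : nat -> nat) (k : nat) : int :=
  (\sum_(x <- level F k) mu_Pi F cobweb_zero x)%R.

Definition whitney_P (F : nat -> nat) (n k : nat) : int :=
  (\sum_(x <- level F k) mu_P F n cobweb_zero x)%R.

From mathcomp Require Import all_boot all_order all_algebra.
Import GRing.Theory Num.Theory.
From mathcomp Require Import zify ring.

(* Every element of rank k > 0 lies above all of V_{k-1} and above nothing
   else of its own level, so its proper lower interval is exactly V_{k-1}.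
   Hence mu(0, x) depends only on the rank of x, and the Moebius recursion
   becomes  m_k = - sum_{s<k} F_s m_s,  solved by
   m_k = (-1)^k prod_{1<=i<k} (F_i - 1).  Summing over the F_k elements of
   level k gives w_k.  Intervals [0, y] of P_n coincide with those of Pi
   as soon as r(y) <= n, so the same computation applies to P_n. *)

Section CobwebMobius.

Variable F : nat -> nat.
Hypothesis F_pos : forall n, 0 < F n.
Hypothesis F0 : F 0 = 1.

Lemma mem_level s z : (z \in level F s) = (z.2 == s) && (0 < z.1 <= F s).
Proof.
case: z => a b /=; apply/mapP/andP => [[j]|[/eqP -> a_bounds]].
  by rewrite mem_iota => j_bounds [-> ->]; split => //; lia.
by exists a => //; rewrite mem_iota; lia.
Qed.

Lemma mem_Vn n z : (z \in Vn F n) = (z.2 <= n) && (0 < z.1 <= F z.2).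
Proof.
apply/flatten_mapP/andP => [[s]|[z_n z_bounds]].
  by rewrite mem_iota mem_level => /andP[_ s_n] /andP[/eqP -> z_bounds]; split => //; lia.
by exists z.2; rewrite ?mem_iota ?mem_level ?eqxx //=; lia.
Qed.

Lemma Vn_cat {m n} : m <= n ->
  Vn F n = Vn F m ++ flatten [seq level F s | s <- iota m.+1 (n - m)].
Proof.
move=> le_mn; rewrite /Vn; have -> : n.+1 = m.+1 + (n - m) by lia.
by rewrite iotaD map_cat flatten_cat add0n.
Qed.

Lemma size_Vn n : n < size (Vn F n).
Proof.
elim: n => [|n IHn]; first by rewrite /Vn /= cats0 size_map size_iota.
rewrite (Vn_cat (leqnSn n)) subSnn /= cats0 size_cat size_map size_iota.
by have := F_pos n.+1; lia.
Qed.

Lemma zero_le_Vn {n z} : z \in Vn F n -> cobweb_le cobweb_zero z.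
Proof.
case: z => a [|c]; rewrite mem_Vn /cobweb_le //= xpair_eqE F0; lia.
Qed.

Lemma sum_level s (G : nat -> int) :
  (\sum_(z <- level F s) G z.2 = G s *+ F s)%R.
Proof.
rewrite /level big_map.
have -> : iota 1 (F s) = index_iota 1 (F s).+1 by rewrite /index_iota subSS subn0.
by rewrite (eq_bigr (fun=> G s)) // sumr_const_nat subSS subn0.
Qed.

Lemma sum_Vn n (G : nat -> int) :
  (\sum_(z <- Vn F n) G z.2 = \sum_(0 <= s < n.+1) G s *+ F s)%R.
Proof. by rewrite /Vn big_flatten big_map; apply: eq_bigr => s _; apply: sum_level. Qed.

Lemma itv_Pi_zero_proper y : 0 < y.2 ->
  [seq z <- itv_Pi F cobweb_zero y | z != y] = Vn F y.2.-1.
Proof.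
case: y => b [//|d] _; rewrite /itv_Pi /rank /= -filter_predI.
rewrite (Vn_cat (leqnSn d)) subSnn filter_cat /= cats0.
rewrite (eq_in_filter (a2 := predT)) ?filter_predT; last first.
  move=> z z_Vn; rewrite /= (zero_le_Vn z_Vn) /cobweb_le.
  case: z z_Vn => a c; rewrite mem_Vn /= !xpair_eqE; lia.
rewrite (eq_in_filter (a2 := pred0)) ?filter_pred0 ?cats0 //.
move=> [a c]; rewrite mem_level /cobweb_le /= !xpair_eqE; lia.
Qed.

Lemma itv_P_zero n y : y.2 <= n -> itv_P F n cobweb_zero y = itv_Pi F cobweb_zero y.
Proof.
move=> le_yn; rewrite /itv_P /itv_Pi /rank (Vn_cat le_yn) filter_cat.
rewrite [X in _ ++ X](eq_in_filter (a2 := pred0)) ?filter_pred0 ?cats0 //.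
move=> [b c] /flatten_mapP[s]; rewrite mem_iota mem_level /= => s_range /andP[/eqP c_s _].
case: y le_yn s_range => a d /= le_yn s_range.
by rewrite /cobweb_le /= !xpair_eqE; lia.
Qed.

Lemma rank_lt_size_itv_Pi y : y \in Vn F y.2 ->
  y.2 < size (itv_Pi F cobweb_zero y).
Proof.
move=> y_Vn; set s := itv_Pi F cobweb_zero y.
have y_s : y \in s by rewrite mem_filter y_Vn (zero_le_Vn y_Vn) /cobweb_le eqxx orbT.
have y_count : 0 < count (pred1 y) s by rewrite -has_count has_pred1.
have proper_size : y.2 <= size [seq z <- s | z != y].
  case: (posnP y.2) => [-> //|y_gt0].
  by rewrite itv_Pi_zero_proper // -{1}(prednK y_gt0) size_Vn.
rewrite -(count_predC (pred1 y)) addnC -size_filter -addn1.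
exact: leq_add proper_size y_count.
Qed.

Definition cobweb_mu0 (k : nat) : int :=
  ((-1) ^+ k * \prod_(1 <= i < k) ((F i)%:Z - 1))%R.

Lemma sum_cobweb_mu0 k : 0 < k ->
  (\sum_(0 <= s < k) cobweb_mu0 s *+ F s = - cobweb_mu0 k)%R.
Proof.
elim: k => [//|[|k] IHk] _.
  by rewrite big_nat1 F0 /cobweb_mu0 !big_geq // expr0 expr1 !mulr1.
rewrite big_nat_recr //= IHk // /cobweb_mu0 [in RHS]big_nat_recr //=.
rewrite -mulr_natr natz (exprS _ k.+1); ring.
Qed.

Section AnyIntervals.

Variables (itv : nat * nat -> nat * nat -> seq (nat * nat)) (N : nat).
Hypothesis itv_zero : forall y, y.2 <= N -> itv cobweb_zero y = itv_Pi F cobweb_zero y.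

Lemma mobius_fuel_zero f y : y.2 < f -> y \in Vn F N ->
  mobius_fuel cobweb_le itv f cobweb_zero y = cobweb_mu0 y.2.
Proof.
elim: f y => [//|f IHf] [a [|k]] /= lt_f y_VN.
  have -> : a = 1 by move: y_VN; rewrite mem_Vn F0 /=; lia.
  by rewrite eqxx /cobweb_mu0 expr0 big_geq.
have le_kN : k.+1 <= N by move: y_VN; rewrite mem_Vn => /andP[].
rewrite /cobweb_le /cobweb_zero /= xpair_eqE andbF.
rewrite itv_zero // -big_filter itv_Pi_zero_proper //=.
rewrite (eq_big_seq (fun z => cobweb_mu0 z.2)); last first.
  move=> [b c]; rewrite mem_Vn /= => /andP[le_ck c_pos].
  by apply: IHf; rewrite ?mem_Vn /= ?c_pos ?andbT; lia.
by rewrite sum_Vn sum_cobweb_mu0 ?opprK.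
Qed.

Lemma sum_level_mobius_zero :
  (\sum_(x <- level F N) mobius cobweb_le itv cobweb_zero x = cobweb_mu0 N *+ F N)%R.
Proof.
rewrite -sum_level; apply: eq_big_seq => x; rewrite mem_level => /andP[/eqP x_N x_pos].
have x_Vn : x \in Vn F x.2 by rewrite mem_Vn x_N leqnn x_pos.
rewrite /mobius itv_zero; last by rewrite x_N.
apply: mobius_fuel_zero.
  exact: rank_lt_size_itv_Pi.
by rewrite -x_N.
Qed.

End AnyIntervals.

End CobwebMobius.

Theorem mainTheorem1 (F : nat -> nat) (F_pos : forall n, 0 < F n)
    (F0 : F 0 = 1) :
  (whitney_Pi F 0 = 1%R /\
   forall k, 0 < k ->
     whitney_Pi F k =
       ((F k)%:Z * (-1) ^+ k * \prod_(1 <= i < k) ((F i)%:Z - 1))%R) /\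
  (forall n,
     whitney_P F n 0 = 1%R /\
     forall k, 0 < k -> k <= n ->
       whitney_P F n k =
         ((F k)%:Z * (-1) ^+ k * \prod_(1 <= i < k) ((F i)%:Z - 1))%R).
Proof.
have formula k : (cobweb_mu0 F k *+ F k =
    (F k)%:Z * (-1) ^+ k * \prod_(1 <= i < k) ((F i)%:Z - 1))%R.
  by rewrite -mulr_natl natz /cobweb_mu0 mulrA.
have formula0 : (cobweb_mu0 F 0 *+ F 0 = 1)%R by rewrite F0 /cobweb_mu0 expr0 big_geq.
have whitney_Pi_mu0 k : whitney_Pi F k = (cobweb_mu0 F k *+ F k)%R.
  rewrite /whitney_Pi /mu_Pi.
  exact: (@sum_level_mobius_zero F F_pos F0 (itv_Pi F) k (fun _ _ => erefl)).
have whitney_P_mu0 n k : k <= n -> whitney_P F n k = (cobweb_mu0 F k *+ F k)%R.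
  move=> le_kn; rewrite /whitney_P /mu_P.
  by apply: (@sum_level_mobius_zero F F_pos F0) => y le_yk; apply: itv_P_zero; lia.
split; first by split => [|k _]; rewrite whitney_Pi_mu0.
by move=> n; split => [|k _ le_kn]; rewrite whitney_P_mu0.
Qed.
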